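(* Let $n,k\ge1$ and let $\mathcal{O}_x$ be a square Hermitian orthogonal design of size $[n,n,2k-1]$. Then there exists an $n\times n$ matrix $\mathcal{L}_x$, each entry of which is a complex multiple of $x_{2k}$, such that $\mathcal{O}_x+\mathcal{L}_x$ is a square Hermitian orthogonal design of size $[n,n,2k]$; equivalently, substituting $x_{2i-1}=(z_i+z_i^* )/2$ and $x_{2i}=(z_i-z_i^* )/(2\sqrt{-1})$ for $i=1,\ldots,k$, $\mathcal{O}_x+\mathcal{L}_x$ becomes a square complex orthogonal design of size $[n,n,k]$.
   Context: Let $x_1,x_2,\ldots$ be formal real indeterminates. A Hermitian orthogonal design (HOD) of size $[p,n,m]$ is a $p\times n$ matrix $\mathcal{O}_x$ whose entries are complex linear combinations of $x_1,\ldots,x_m$ such that $\mathcal{O}_x^H\mathcal{O}_x=(x_1^2+\cdots+x_m^2)I_n$; square if $p=n$. With $z_1,\ldots,z_k$ formal complex indeterminates, a square complex orthogonal design of size $[n,n,k]$ is an $n\times n$ matrix whose entries are complex linear combinations of $z_1,\ldots,z_k,z_1^*,\ldots,z_k^*$ such that $\mathcal{O}_z^H\mathcal{O}_z=(|z_1|^2+\cdots+|z_k|^2)I_n$. *)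

From HB Require Import structures.
From mathcomp Require Import all_boot all_order all_algebra.
Set Implicit Arguments. Unset Strict Implicit. Unset Printing Implicit Defensive.
Import Order.TTheory GRing.Theory Num.Theory Num.Syntax.
Local Open Scope ring_scope.

Definition hermmx (C : numClosedFieldType) (p q : nat) (A : 'M[C]_(p, q)) : 'M[C]_(q, p) :=
  (map_mx Num.conj A)^T.

(* A p x q matrix whose entries are complex linear combinations of the
   formal real indeterminates x_1..x_m is encoded by its coefficient
   matrices A 0, ..., A (m-1) (index i <-> x_{i+1}); its value at x is: *)
Definition hod_eval (C : numClosedFieldType) (p q m : nat)
  (A : nat -> 'M[C]_(p, q)) (x : nat -> C) : 'M[C]_(p, q) :=
  \sum_(i < m) x i *: A i.

(* Hermitian orthogonal design of size [p,q,m]: O^H O = (x_1^2+...+x_m^2) I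
   as an identity in the real indeterminates (i.e. for all real values). *)
Definition is_HOD (C : numClosedFieldType) (p q m : nat)
  (A : nat -> 'M[C]_(p, q)) : Prop :=
  forall x : nat -> C, (forall i, x i \is Num.real) ->
    hermmx (hod_eval m A x) *m hod_eval m A x = (\sum_(i < m) x i ^+ 2)%:M.

Definition is_CSOD (C : numClosedFieldType) (n k : nat)
  (F : (nat -> C) -> 'M[C]_n) : Prop :=
  (exists B D : nat -> 'M[C]_n, forall z : nat -> C,
      F z = \sum_(i < k) (z i *: B i + (Num.conj (z i)) *: D i))
  /\ forall z : nat -> C,
      hermmx (F z) *m F z = (\sum_(i < k) z i * Num.conj (z i))%:M.

(* The substitution x_{2i-1} = (z_i + conj(z_i))/2, x_{2i} = (z_i - conj(z_i))/(2 sqrt(-1)),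
   written 0-based: x (2i) and x (2i+1) come from z i. *)
Definition subst_z (C : numClosedFieldType) (z : nat -> C) : nat -> C :=
  fun j => if odd j
           then (z j./2 - Num.conj (z j./2)) / (2 * 'i)
           else (z j./2 + Num.conj (z j./2)) / 2.

(* Write a_i := A_i^H.  A square HOD of size [n,n,m] is a family of unitary
   matrices A_0, ..., A_(m-1) with a_i A_j + a_j A_i = 0 for i <> j.  The
   matrices M_i := a_0 A_i (0 < i < m) are then skew-Hermitian, unitary and
   pairwise anticommuting.  When m is odd there is an even number of them, so
   their product P anticommutes with each M_i, and P or sqrt(-1) P is a
   skew-Hermitian unitary N.  The new coefficient L := A_0 N satisfies the HOD
   relations against every A_i, which extends the design to size [n,n,m+1].
   Finally any HOD of even size 2k becomes a complex orthogonal design after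
   the substitution x_(2i-1) = Re z_i, x_(2i) = Im z_i. *)
From HB Require Import structures.
From mathcomp Require Import all_boot all_order all_algebra.
From mathcomp Require Import ring.
Import Order.TTheory GRing.Theory Num.Theory.
Set Implicit Arguments.
Unset Strict Implicit.
Unset Printing Implicit Defensive.
Local Open Scope ring_scope.

Section Hermitian.
Variable C : numClosedFieldType.
Local Notation H := (@hermmx C _ _).

Lemma hermM p q r (A : 'M[C]_(p, q)) (B : 'M[C]_(q, r)) : H (A *m B) = H B *m H A.
Proof. by rewrite /hermmx map_mxM trmx_mul. Qed.

Lemma hermD p q (A B : 'M[C]_(p, q)) : H (A + B) = H A + H B.
Proof. by rewrite /hermmx map_mxD linearD. Qed.

Lemma hermZ p q a (A : 'M[C]_(p, q)) : H (a *: A) = a^* *: H A.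
Proof. by rewrite /hermmx map_mxZ linearZ. Qed.

Lemma herm1 p : H (1%:M : 'M[C]_p) = 1%:M.
Proof. by rewrite /hermmx map_mx1 trmx1. Qed.

Lemma hermK p q (A : 'M[C]_(p, q)) : H (H A) = A.
Proof. by apply/matrixP => i j; rewrite /hermmx !mxE conjCK. Qed.

Lemma herm_sum p q m (F : 'I_m -> 'M[C]_(p, q)) :
  H (\sum_(i < m) F i) = \sum_(i < m) H (F i).
Proof.
by elim/big_rec2: _ => [|i x y _ <-]; rewrite ?hermD // /hermmx map_mx0 trmx0.
Qed.

Lemma sum_indicator_scale n m (A : nat -> 'M[C]_n) i : (i < m)%N ->
  \sum_(l < m) (l == i :> nat)%:R *: A l = A i.
Proof.
move=> im; rewrite (bigD1 (Ordinal im)) //= eqxx scale1r.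
by rewrite big1 ?addr0 // => j; rewrite -val_eqE => /negbTE /= ->; rewrite scale0r.
Qed.

Lemma sum_indicator_sqr m i : (i < m)%N ->
  \sum_(l < m) ((l == i :> nat)%:R ^+ 2) = 1 :> C.
Proof.
move=> im; rewrite (bigD1 (Ordinal im)) //= eqxx expr1n.
by rewrite big1 ?addr0 // => j; rewrite -val_eqE => /negbTE /= ->; rewrite expr0n.
Qed.

(* Polarization: evaluate at the indicator vectors e_i and e_i + e_j. *)
Lemma is_HODP n m (A : nat -> 'M[C]_n) :
  is_HOD m A <->
  (forall i, (i < m)%N -> H (A i) *m A i = 1%:M) /\
  (forall i j, (i < m)%N -> (j < m)%N -> i != j ->
     H (A i) *m A j + H (A j) *m A i = 0).
Proof.
split=> [hA | [h1 h2]].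
  have unitA i : (i < m)%N -> H (A i) *m A i = 1%:M.
    move=> im; have := hA (fun l => (l == i)%:R) (fun _ => realn _ _).
    by rewrite /hod_eval sum_indicator_scale // sum_indicator_sqr.
  split=> // i j im jm ij.
  have := hA (fun l => (l == i)%:R + (l == j)%:R) (fun _ => realD (realn _ _) (realn _ _)).
  rewrite /hod_eval; under eq_bigr do rewrite scalerDl.
  rewrite big_split /= !sum_indicator_scale //.
  have -> : \sum_(l < m) ((l == i :> nat)%:R + (l == j :> nat)%:R) ^+ 2 =
            \sum_(l < m) ((l == i :> nat)%:R ^+ 2) + \sum_(l < m) ((l == j :> nat)%:R ^+ 2) :> C.
    rewrite -big_split; apply: eq_bigr => l _ /=.
    by case: eqP => [->|_]; rewrite ?(negbTE ij) /= ?(add0r, addr0, expr0n).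
  rewrite !sum_indicator_sqr // hermD mulmxDl !mulmxDr !unitA // raddfD /=.
  by rewrite [_ *m _ + 1%:M]addrC addrACA -[X in _ = X]addr0 => /addrI.
move=> x xr; rewrite /hod_eval herm_sum.
under eq_bigr do rewrite hermZ conj_Creal //.
rewrite mulmx_suml.
set S := \sum_i _.
have S_double : S = \sum_(i < m) \sum_(j < m) (x i * x j) *: (H (A i) *m A j).
  rewrite /S; apply: eq_bigr => i _; rewrite mulmx_sumr; apply: eq_bigr => j _.
  by rewrite -scalemxAl -scalemxAr scalerA.
have S2 : S *+ 2 = (\sum_(i < m) x i ^+ 2)%:M *+ 2.
  rewrite mulr2n S_double [in X in _ + X]exchange_big -big_split.
  rewrite -scalemx1 scaler_suml -sumrMnl; apply: eq_bigr => i _.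
  rewrite -big_split (bigD1 i) //= big1 ?addr0 => [|j ji].
    by rewrite h1 // -expr2 scalemx1 mulr2n.
  by rewrite [x j * _]mulrC -scalerDr h2 ?scaler0 // eq_sym.
by apply: (scalerI (a := 2)); rewrite ?pnatr_eq0 // !scaler_nat.
Qed.

Lemma HOD_extend n m (A : nat -> 'M[C]_n) (L : 'M[C]_n) : is_HOD m A ->
  H L *m L = 1%:M -> (forall j, (j < m)%N -> H L *m A j + H (A j) *m L = 0) ->
  is_HOD m.+1 (fun i => if i == m then L else A i).
Proof.
move=> /is_HODP[unitA antiA] unitL antiL; apply/is_HODP; split=> [i|i j].
  rewrite ltnS leq_eqVlt => /predU1P[->|im]; first by rewrite eqxx; exact: unitL.
  by rewrite (ltn_eqF im); exact: unitA.
rewrite ltnS leq_eqVlt => /predU1P[->|im];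
  rewrite ltnS leq_eqVlt => /predU1P[->|jm] ij.
- by rewrite eqxx in ij.
- by rewrite eqxx (ltn_eqF jm) antiL.
- by rewrite eqxx (ltn_eqF im) addrC antiL.
- by rewrite (ltn_eqF im) (ltn_eqF jm) antiA.
Qed.

End Hermitian.

Lemma mul_prod_anticomm (R : pzRingType) (M : nat -> R) j (r : seq nat) :
  {in r, forall i, i != j -> M j * M i = - (M i * M j)} ->
  M j * \prod_(i <- r) M i = (-1) ^+ count (predC1 j) r * (\prod_(i <- r) M i * M j).
Proof.
elim: r => [|a r IHr] anti; first by rewrite big_nil mul1r mulr1 expr0 mul1r.
have {}IHr := IHr (sub_in1 (@mem_behead _ (a :: r)) anti).
rewrite big_cons /= mulrA; case: eqP => [->|/eqP aj] /=.
  by rewrite add0n -mulrA [in LHS]IHr mulrA (commr_sign (M j)) -!mulrA.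
rewrite anti ?mem_head // mulNr -mulrA [in LHS]IHr mulrA (commr_sign (M a)).
by rewrite add1n exprS mulN1r mulNr -!mulrA.
Qed.

Section AntiInvolutionProducts.
Variables (R : pzRingType) (h : R -> R).
Hypotheses (hM : forall a b, h (a * b) = h b * h a) (h1 : h 1 = 1).

Lemma anti_prod_skew (M : nat -> R) (r : seq nat) : uniq r ->
  {in r, forall i, h (M i) = - M i} ->
  {in r &, forall i j, i != j -> M j * M i = - (M i * M j)} ->
  exists e, h (\prod_(i <- r) M i) = (-1) ^+ e * \prod_(i <- r) M i.
Proof.
elim: r => [|a r IHr] /=; first by exists 0%N; rewrite big_nil h1 expr0 mul1r.
case/andP=> _ ur skew anti.
have sub_r : {subset r <= a :: r} := @mem_behead _ (a :: r).
have [e He] := IHr ur (sub_in1 sub_r skew) (sub_in2 sub_r anti).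
have Ma := @mul_prod_anticomm R M a r (fun i ir => anti i a (sub_r i ir) (mem_head _ _)).
exists (e + count (predC1 a) r).+1.
rewrite big_cons hM He skew ?mem_head // mulrN -mulrA.
rewrite -[\prod_(i <- r) M i * M a](signrMK (count (predC1 a) r)) -Ma.
by rewrite exprS mulN1r mulNr exprD !mulrA.
Qed.

Lemma anti_prod_unitary (M : nat -> R) (r : seq nat) :
  {in r, forall i, h (M i) * M i = 1} ->
  h (\prod_(i <- r) M i) * \prod_(i <- r) M i = 1.
Proof.
elim: r => [|a r IHr] unitM; first by rewrite big_nil h1 mul1r.
rewrite big_cons hM -mulrA [h (M a) * _]mulrA unitM ?mem_head // mul1r.
exact: IHr (sub_in1 (@mem_behead _ (a :: r)) unitM).
Qed.

End AntiInvolutionProducts.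

Lemma count_predC1_uniq (T : eqType) (j : T) (r : seq T) : uniq r -> j \in r ->
  (count (predC1 j) r).+1 = size r.
Proof.
move=> ur jr; rewrite -(count_predC (pred1 j)) (count_uniq_mem _ ur) jr add1n.
by congr _.+1; apply: eq_count.
Qed.

Section SquareMatrices.
Variables (C : numClosedFieldType) (n : nat).
Local Notation H := (@hermmx C n.+1 n.+1).
Implicit Types (M : nat -> 'M[C]_n.+1) (r : seq nat).

Lemma anticomm_skew_unitary_ext M r : uniq r -> ~~ odd (size r) ->
  {in r, forall i, H (M i) = - M i} ->
  {in r, forall i, H (M i) * M i = 1} ->
  {in r &, forall i j, i != j -> M j * M i = - (M i * M j)} ->
  exists N : 'M[C]_n.+1,
    [/\ H N = - N, H N * N = 1 & {in r, forall j, M j * N = - (N * M j)}].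
Proof.
move=> ur even_r skewM unitM anti.
have hM (a b : 'M[C]_n.+1) : H (a * b) = H b * H a by exact: hermM.
have h1 : H 1 = 1 by exact: herm1.
pose P := \prod_(i <- r) M i.
have [e He] : exists e, H P = (-1) ^+ e * P by exact: anti_prod_skew.
have unitP : H P * P = 1 by exact: anti_prod_unitary.
have anticP j : j \in r -> M j * P = - (P * M j).
  move=> jr; rewrite /P mul_prod_anticomm; last by move=> i ir; apply: anti.
  have odd_count : odd (count (predC1 j) r).
    by move: even_r; rewrite -(count_predC1_uniq ur jr) /= negbK.
  by rewrite -signr_odd odd_count expr1 mulN1r.
exists (if odd e then P else 'i *: P); case: ifP => odd_e; split => //.
- by rewrite He -signr_odd odd_e expr1 mulN1r.
- by rewrite hermZ He -signr_odd odd_e expr0 mul1r conjCi scaleNr.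
- rewrite hermZ -scalerAl -scalerAr scalerA conjCi mulNr -expr2 sqrCi opprK.
  by rewrite scale1r.
- by move=> j jr; rewrite -scalerAr -scalerAl anticP // scalerN.
Qed.

Lemma HOD_odd_extension m (A : nat -> 'M[C]_n.+1) : odd m -> is_HOD m A ->
  exists L : 'M[C]_n.+1,
    H L *m L = 1%:M /\ forall j, (j < m)%N -> H L *m A j + H (A j) *m L = 0.
Proof.
move=> odd_m /is_HODP[unitA antiA].
have hM (a b : 'M[C]_n.+1) : H (a * b) = H b * H a by exact: hermM.
have m_gt0 : (0 < m)%N by rewrite lt0n; apply: contraTneq odd_m => ->.
pose A0 := A 0%N; pose M i := H A0 * A i.
have unitA0 : H A0 * A0 = 1 by exact: unitA.
have coA0 : A0 * H A0 = 1 by exact: mulmx1C.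
have antiA0 i : (0 < i < m)%N -> H (A i) * A0 = - M i.
  case/andP=> i_gt0 im; apply/eqP; rewrite -addr_eq0 addrC; apply/eqP.
  by apply: antiA; rewrite // eq_sym -lt0n.
have MM i j : (0 < i < m)%N -> M i * M j = - (H (A i) * A j).
  move=> im; rewrite /M mulrA -[H A0 * A i]opprK -antiA0 //.
  by rewrite !mulNr -(mulrA _ A0) coA0 mulr1.
pose r := iota 1 m.-1.
have mem_r i : (i \in r) = (0 < i < m)%N by rewrite mem_iota add1n prednK.
have [N [skewN unitN antiN]] : exists N : 'M[C]_n.+1,
    [/\ H N = - N, H N * N = 1 & {in r, forall j, M j * N = - (N * M j)}].
  apply: anticomm_skew_unitary_ext; first exact: iota_uniq.
  - by rewrite size_iota -oddS prednK.
  - by move=> i; rewrite mem_r => im; rewrite hM hermK antiA0.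
  - move=> i; rewrite mem_r => im; rewrite hM hermK antiA0 // mulNr MM // opprK.
    by apply: unitA; case/andP: im.
  - move=> i j; rewrite !mem_r => im jm ij; rewrite !MM // opprK.
    apply/eqP; rewrite eq_sym -addr_eq0; apply/eqP.
    by apply: antiA => //; [case/andP: im | case/andP: jm].
exists (A0 * N); rewrite !mulmxE -[1%:M]/1; split=> [|[|j] jm].
- by rewrite hM -mulrA (mulrA (H A0)) unitA0 mul1r.
- by rewrite hM -mulrA unitA0 mulr1 mulrA -/A0 unitA0 mul1r skewN addNr.
- rewrite hM -mulrA -/(M j.+1) mulrA antiA0 // skewN mulNr mulNr antiN ?mem_r //.
  by rewrite opprK addNr.
Qed.

End SquareMatrices.

Lemma sum_double (V : nmodType) (F : nat -> V) k :
  \sum_(j < k.*2) F j = \sum_(i < k) (F i.*2 + F i.*2.+1).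
Proof.
elim: k => [|k IHk]; first by rewrite !big_ord0.
by rewrite doubleS !big_ord_recr /= IHk addrA.
Qed.

Section ComplexSubstitution.
Variable C : numClosedFieldType.

Lemma subst_zE (z : nat -> C) j :
  subst_z z j = if odd j then 'Im (z j./2) else 'Re (z j./2).
Proof.
by rewrite /subst_z ReE ImE; case: odd => //; rewrite invfM invCi; ring.
Qed.

Lemma subst_z_real (z : nat -> C) j : subst_z z j \is Num.real.
Proof. by rewrite subst_zE; case: odd; [exact: Creal_Im | exact: Creal_Re]. Qed.

Lemma HOD_CSOD n k (A : nat -> 'M[C]_n) :
  is_HOD k.*2 A -> is_CSOD k (fun z => hod_eval k.*2 A (subst_z z)).
Proof.
move=> hA; split=> [|z].
  exists (fun i => 2^-1 *: A i.*2 + (2 * 'i)^-1 *: A i.*2.+1).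
  exists (fun i => 2^-1 *: A i.*2 - (2 * 'i)^-1 *: A i.*2.+1) => z.
  rewrite /hod_eval (sum_double (fun j => subst_z z j *: A j)).
  apply: eq_bigr => i _; rewrite /subst_z /= !odd_double /= doubleK uphalf_double.
  rewrite !scalerDr scalerN !scalerA !mulrDl !scalerDl mulNr scaleNr.
  by rewrite addrACA.
rewrite (hA _ (subst_z_real z)); congr _%:M.
rewrite (sum_double (fun j => subst_z z j ^+ 2)); apply: eq_bigr => i _.
by rewrite !subst_zE /= odd_double /= doubleK uphalf_double -normC2_Re_Im normCK.
Qed.

End ComplexSubstitution.

Unset Implicit Arguments.

Theorem corollary2 (C : numClosedFieldType) (n k : nat)
  (hn : (1 <= n)%N) (hk : (1 <= k)%N) (A : nat -> 'M[C]_n) :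
  is_HOD (k.*2.-1) A ->
  exists Lc : 'M[C]_n,
    let A' := fun i : nat => if i == k.*2.-1 then Lc else A i in
    is_HOD (k.*2) A' /\
    is_CSOD k (fun z => hod_eval (k.*2) A' (subst_z z)).
Proof.
case: n hn A => // n _ A hA.
have odd_m : odd k.*2.-1 by rewrite -(prednK hk) doubleS /= odd_double.
have [L [unitL antiL]] := HOD_odd_extension odd_m hA.
exists L => A'.
have hA' : is_HOD k.*2 A'.
  by have := HOD_extend hA unitL antiL; rewrite prednK ?double_gt0.
by split; last exact: HOD_CSOD.
Qed.
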